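(* Let $K=\{x\in\mathbb{R}^m:Ax\succeq0\}$ with $A\in\mathcal{A}$, and assume $F$ is $K$-smooth with $\ell\in\mathrm{int}(K)$ and strongly $K$-convex with $\mu\in\mathrm{int}(K)$. Let the constants in the Barzilai-Borwein rule satisfy $0<\alpha_{\min}\le\min_{i\in[l]}\langle A_i,\mu\rangle$ and $\alpha_{\max}\ge\max_{i\in[l]}\langle A_i,\ell\rangle$, let $x^{-1}\ne x^0$, and let $\{x^k\}$ be generated by Algorithm 8 with $\gamma\in(0,1)$, assumed not to terminate ($d^k\neq0$ for all $k$). Then: (i) $A\mu\preceq\alpha^k\preceq A\ell$ for all $k$; (ii) $t_k\ge\min_{i\in[l]}\gamma\alpha_i^k/\langle A_i,\ell\rangle$; (iii) $\{x^k\}$ converges to an efficient solution $x^*$ of $\min_K F(x)$; (iv) $\|x^{k+1}-x^*\|\le\sqrt{1-\min_{i\in[l]}t_k\langle A_i,\mu\rangle/\alpha_i^k}\,\|x^k-x^*\|$ for all $k\ge0$.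
   Context: $K\subset\mathbb{R}^m$ is a pointed polyhedral cone with nonempty interior; $y\preceq_K y'$ iff $y'-y\in K$; on $\mathbb{R}^l$, $\preceq$ is componentwise. $\mathcal{A}:=\{A\in\mathbb{R}^{l\times m}:AK=\mathbb{R}^l_+\}$, $K=\{x:Ax\succeq0\}$; $A_i$ is the $i$-th row of $A$, $[l]=\{1,\dots,l\}$, $\Delta_l=\{\lambda\in\mathbb{R}^l_+:\sum_i\lambda_i=1\}$. $F:\mathbb{R}^n\to\mathbb{R}^m$ differentiable with Jacobian $JF$. Strongly $K$-convex with $\mu$: $JF(x)(y-x)+\tfrac12\|y-x\|^2\mu\preceq_K F(y)-F(x)$ $\forall x,y$; $K$-smooth with $\ell$: $F(y)-F(x)\preceq_K JF(x)(y-x)+\tfrac12\|y-x\|^2\ell$ $\forall x,y$. Efficient: no $x$ with $F(x)\preceq_K F(x^* )$, $F(x)\ne F(x^* )$. Barzilai-Borwein rule: with $s_{k-1}=x^k-x^{k-1}$ and $y_i^{k-1}$ the $i$-th row of $A(JF(x^k)-JF(x^{k-1}))$ (a vector in $\mathbb{R}^n$), $\alpha_i^k:=\max\{\alpha_{\min},\min\{\langle s_{k-1},y_i^{k-1}\rangle/\|s_{k-1}\|^2,\alpha_{\max}\}\}$ if $\langle s_{k-1},y_i^{k-1}\rangle>0$; $\alpha_i^k:=\max\{\alpha_{\min},\min\{\|y_i^{k-1}\|/\|s_{k-1}\|,\alpha_{\max}\}\}$ if $\langle s_{k-1},y_i^{k-1}\rangle<0$; $\alpha_i^k:=\alpha_{\min}$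 if it equals $0$. Algorithm 8 ($K$-Barzilai-Borwein descent method): given $x^0$, $x^{-1}$, for $k=0,1,\dots$: compute $\alpha^k$; with $\Lambda^k=\mathrm{diag}(1/\alpha_1^k,\dots,1/\alpha_l^k)$, $d^k:=\arg\min_{d}\max_{\lambda\in\Delta_l}\langle\lambda,\Lambda^kAJF(x^k)d\rangle+\tfrac12\|d\|^2$; if $d^k=0$ stop; otherwise $t_k:=\max\{\gamma^j:j\in\mathbb{N},\ A(F(x^k+\gamma^jd^k)-F(x^k))\preceq\gamma^j(AJF(x^k)d^k+\tfrac12\|d^k\|^2\alpha^k)\}$, $x^{k+1}:=x^k+t_kd^k$. *)

From HB Require Import structures.
From mathcomp Require Import all_boot all_order all_algebra.
From mathcomp Require Import all_classical all_reals all_analysis.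
Set Implicit Arguments. Unset Strict Implicit. Unset Printing Implicit Defensive.
Import Order.TTheory GRing.Theory Num.Theory.
Import numFieldNormedType.Exports.
Local Open Scope classical_set_scope.
Local Open Scope ring_scope.

Section Defs.
Variable R : realType.

Definition dotv k (u v : 'rV[R]_k) : R := \sum_(i < k) u 0 i * v 0 i.
Definition enorm k (u : 'rV[R]_k) : R := Num.sqrt (dotv u u).

Definition minI l (f : 'I_l.+1 -> R) : R := \big[Num.min/f ord0]_(i < l.+1) f i.
Definition maxI l (f : 'I_l.+1 -> R) : R := \big[Num.max/f ord0]_(i < l.+1) f i.

Definition Amap l m (A : 'M[R]_(l, m)) (y : 'rV[R]_m) : 'rV[R]_l := y *m A^T.

Definition coneK l m (A : 'M[R]_(l, m)) : set 'rV[R]_m :=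
  [set x | forall i, 0 <= Amap A x 0 i].

Definition leK l m (A : 'M[R]_(l, m)) (y y' : 'rV[R]_m) : Prop := coneK A (y' - y).

Definition in_calA l m (A : 'M[R]_(l, m)) : Prop :=
  Amap A @` coneK A = [set z : 'rV[R]_l | forall i, 0 <= z 0 i].

Definition pointed_cone m (K : set 'rV[R]_m) : Prop :=
  forall x, K x -> K (- x) -> x = 0.

(* Jacobian matrix of F at x, acting on row vectors: JF(x) d = d *m jac F x *)
Definition jac n m (F : 'rV[R]_n -> 'rV[R]_m) (x : 'rV[R]_n) : 'M[R]_(n, m) :=
  lin1_mx ('d F x).

Definition strongly_Kconvex n l m (A : 'M[R]_(l, m)) (F : 'rV[R]_n -> 'rV[R]_m)
  (mu : 'rV[R]_m) : Prop :=
  forall x y, leK A ('d F x (y - x) + (enorm (y - x) ^+ 2 / 2) *: mu) (F y - F x).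

Definition K_smooth n l m (A : 'M[R]_(l, m)) (F : 'rV[R]_n -> 'rV[R]_m)
  (ell : 'rV[R]_m) : Prop :=
  forall x y, leK A (F y - F x) ('d F x (y - x) + (enorm (y - x) ^+ 2 / 2) *: ell).

Definition efficient n l m (A : 'M[R]_(l, m)) (F : 'rV[R]_n -> 'rV[R]_m)
  (xs : 'rV[R]_n) : Prop :=
  ~ (exists x, leK A (F x) (F xs) /\ F x <> F xs).

Definition simplex l : set 'rV[R]_l :=
  [set lam | (forall i, 0 <= lam 0 i) /\ \sum_(i < l) lam 0 i = 1].

Definition subobj n l m (A : 'M[R]_(l, m)) (F : 'rV[R]_n -> 'rV[R]_m)
  (x : 'rV[R]_n) (alpha : 'I_l -> R) (d : 'rV[R]_n) : R :=
  sup [set dotv lam (\row_i (Amap A ('d F x d) 0 i / alpha i)) | lam in @simplex l]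
  + enorm d ^+ 2 / 2.

Definition bb n (amin amax : R) (s y : 'rV[R]_n) : R :=
  let sy := dotv s y in
  if 0 < sy then Num.max amin (Num.min (sy / enorm s ^+ 2) amax)
  else if sy < 0 then Num.max amin (Num.min (enorm y / enorm s) amax)
  else amin.

Definition yBB n l m (A : 'M[R]_(l, m)) (F : 'rV[R]_n -> 'rV[R]_m)
  (xprev xk : 'rV[R]_n) (i : 'I_l) : 'rV[R]_n :=
  (col i (jac F xk *m A^T - jac F xprev *m A^T))^T.

Definition alphaBB n l m (amin amax : R) (A : 'M[R]_(l, m))
  (F : 'rV[R]_n -> 'rV[R]_m) (xprev xk : 'rV[R]_n) (i : 'I_l) : R :=
  bb amin amax (xk - xprev) (yBB A F xprev xk i).

Definition ls_cond n l m (A : 'M[R]_(l, m)) (F : 'rV[R]_n -> 'rV[R]_m)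
  (x d : 'rV[R]_n) (alpha : 'I_l -> R) (c : R) : Prop :=
  forall i, Amap A (F (x + c *: d) - F x) 0 i
            <= c * (Amap A ('d F x d) 0 i + enorm d ^+ 2 / 2 * alpha i).

Definition prevx n (xm1 : 'rV[R]_n) (x : nat -> 'rV[R]_n) (k : nat) : 'rV[R]_n :=
  if k is k'.+1 then x k' else xm1.

Definition KBB_seq n l m (A : 'M[R]_(l, m)) (F : 'rV[R]_n -> 'rV[R]_m)
  (amin amax gamma : R) (xm1 : 'rV[R]_n) (x : nat -> 'rV[R]_n)
  (alpha : nat -> 'I_l -> R) (d : nat -> 'rV[R]_n) (t : nat -> R) : Prop :=
  (forall k i, alpha k i = alphaBB amin amax A F (prevx xm1 x k) (x k) i) /\
  (forall k d', subobj A F (x k) (alpha k) (d k) <= subobj A F (x k) (alpha k) d') /\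
  (forall k, d k <> 0) /\
  (forall k, exists j : nat,
      t k = gamma ^+ j /\ ls_cond A F (x k) (d k) (alpha k) (gamma ^+ j) /\
      forall j' : nat, ls_cond A F (x k) (d k) (alpha k) (gamma ^+ j') ->
                       gamma ^+ j' <= gamma ^+ j) /\
  (forall k, x k.+1 = x k + t k *: d k).

End Defs.

(* The direction subproblem is a strongly convex min-max problem; its optimality
   conditions give [max_i <A_i, JF(x) d> / alpha_i = -|d|^2] and, for every [u],
   an index [i] with [<A_i, JF(x) u> / alpha_i + <d, u> >= 0].  Together with
   strong K-convexity and the Armijo test this yields, for every [y] with
   [A F y <= A F x^{k+1}] componentwise,
     [|x^{k+1} - y|^2 <= (1 - min_i t_k <A_i, mu> / alpha_i) |x^k - y|^2].
   The two-sided K-bounds trap the BB steps in [[<A_i, mu>, <A_i, ell>]], so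
   backtracking gives [t_k >= gamma min_i alpha_i / <A_i, ell>] and the
   contraction factor stays uniformly below 1.  Since [A F x^k] decreases, taking
   [y = x^j] with [j >= k] makes the iterates Cauchy, taking [y] the limit gives
   the rate, and any [y] dominating the limit forces [x^k --> y], whence
   efficiency. *)

From HB Require Import structures.
From mathcomp Require Import all_boot all_order all_algebra.
From mathcomp Require Import all_classical all_reals all_analysis.
From mathcomp Require Import lra ring.
Set Implicit Arguments. Unset Strict Implicit. Unset Printing Implicit Defensive.
Import Order.TTheory GRing.Theory Num.Theory.
Import numFieldNormedType.Exports.
Local Open Scope classical_set_scope.
Local Open Scope ring_scope.

Section Euclidean.
Variables (R : realType) (k : nat).
Implicit Types (a : R) (u v w : 'rV[R]_k).

Lemma dotvC u v : dotv u v = dotv v u.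
Proof. by apply: eq_bigr => i _; rewrite mulrC. Qed.

Lemma dotvDl u v w : dotv (u + v) w = dotv u w + dotv v w.
Proof. by rewrite /dotv -big_split; apply: eq_bigr => i _; rewrite mxE mulrDl. Qed.

Lemma dotvZl a u w : dotv (a *: u) w = a * dotv u w.
Proof. by rewrite /dotv mulr_sumr; apply: eq_bigr => i _; rewrite mxE mulrA. Qed.

Lemma dotvNl u w : dotv (- u) w = - dotv u w.
Proof. by rewrite -scaleN1r dotvZl mulN1r. Qed.

Lemma dotvBl u v w : dotv (u - v) w = dotv u w - dotv v w.
Proof. by rewrite dotvDl dotvNl. Qed.

Lemma dotvDr u v w : dotv w (u + v) = dotv w u + dotv w v.
Proof. by rewrite !(dotvC w) dotvDl. Qed.

Lemma dotvZr a u w : dotv w (a *: u) = a * dotv w u.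
Proof. by rewrite !(dotvC w) dotvZl. Qed.

Lemma dotvNr u w : dotv w (- u) = - dotv w u.
Proof. by rewrite !(dotvC w) dotvNl. Qed.

Lemma dotvBr u v w : dotv w (u - v) = dotv w u - dotv w v.
Proof. by rewrite !(dotvC w) dotvBl. Qed.

Lemma dotv0l u : dotv 0 u = 0.
Proof. by rewrite -[0](scale0r 0) dotvZl mul0r. Qed.

Lemma dotv0r u : dotv u 0 = 0.
Proof. by rewrite dotvC dotv0l. Qed.

Lemma dotv_ge0 u : 0 <= dotv u u.
Proof. by apply: sumr_ge0 => i _; rewrite -expr2 sqr_ge0. Qed.

Lemma dotv_gt0 u : u != 0 -> 0 < dotv u u.
Proof.
move=> u0; rewrite lt_def dotv_ge0 andbT; apply: contraNneq u0 => /eqP.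
rewrite psumr_eq0 => [/allP u0|i _]; last by rewrite -expr2 sqr_ge0.
apply/eqP/rowP => j; rewrite mxE; apply/eqP.
by have /implyP := u0 j (mem_index_enum j); rewrite mulf_eq0 orbb; apply.
Qed.

Lemma enorm_ge0 u : 0 <= enorm u.
Proof. exact: sqrtr_ge0. Qed.

Lemma enorm_sqr u : enorm u ^+ 2 = dotv u u.
Proof. by rewrite sqr_sqrtr // dotv_ge0. Qed.

Lemma CauchySchwarz_dotv u v : dotv u v <= enorm u * enorm v.
Proof.
have [->|u0] := eqVneq u 0; first by rewrite dotv0l mulr_ge0 ?enorm_ge0.
have [->|v0] := eqVneq v 0; first by rewrite dotv0r mulr_ge0 ?enorm_ge0.
have a0 : 0 < enorm u by rewrite sqrtr_gt0 dotv_gt0.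
have b0 : 0 < enorm v by rewrite sqrtr_gt0 dotv_gt0.
have := dotv_ge0 (enorm v *: u - enorm u *: v).
rewrite !(dotvBl, dotvBr, dotvZl, dotvZr) -!enorm_sqr (dotvC v u) => h.
have : 0 <= 2 * (enorm u * enorm v) * (enorm u * enorm v - dotv u v) by nra.
by rewrite pmulr_rge0 ?subr_ge0 // mulr_gt0 // mulr_gt0.
Qed.

Lemma enormD u v : enorm (u + v) <= enorm u + enorm v.
Proof.
rewrite -(ler_pXn2r (n := 2)) ?nnegrE ?addr_ge0 ?enorm_ge0 //.
rewrite enorm_sqr dotvDl !dotvDr (dotvC v u) -!enorm_sqr sqrrD.
have := CauchySchwarz_dotv u v; lra.
Qed.

Lemma normr_le_enorm u : `|u| <= enorm u.
Proof.
rewrite [leLHS]/Num.Def.normr /= mx_normrE; apply: bigmax_le; first exact: enorm_ge0.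
move=> [i j] _ /=; rewrite (ord1 i) -sqrtr_sqr ler_sqrt ?dotv_ge0 //.
rewrite /dotv (bigD1 j) //= expr2 lerDl; apply: sumr_ge0 => ? _.
by rewrite -expr2 sqr_ge0.
Qed.

End Euclidean.

Section MinMax.
Variables (R : realType) (l : nat).
Implicit Types (f : 'I_l.+1 -> R) (c : R).

Lemma minI_le f i : minI f <= f i.
Proof. exact: bigmin_le. Qed.

Lemma le_minI f c : (forall i, c <= f i) -> c <= minI f.
Proof. by move=> h; apply: le_bigmin. Qed.

Lemma le_maxI f i : f i <= maxI f.
Proof. exact: le_bigmax. Qed.

Lemma minI_attained f : exists i, minI f = f i.
Proof.
rewrite /minI; elim/big_ind: _ => [|a b [i ->] [j ->]|i _]; try by eexists.
by case: leP => _; eexists.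
Qed.

Lemma maxI_attained f : exists i, maxI f = f i.
Proof.
rewrite /maxI; elim/big_ind: _ => [|a b [i ->] [j ->]|i _]; try by eexists.
by case: leP => _; eexists.
Qed.

End MinMax.

Lemma le0_of_le_mul (R : realType) (X C : R) :
  (forall e, 0 < e <= 1 -> X <= e * C) -> X <= 0.
Proof.
move=> h; rewrite leNgt; apply/negP => X0.
have XC0 : 0 < X + `|C| by rewrite ltr_pwDl.
pose e := X / (X + `|C|).
have /h hX : 0 < e <= 1 by rewrite divr_gt0 //= ler_pdivrMr // mul1r lerDl.
have : X <= e * `|C| by apply: le_trans hX (ler_wpM2l _ (ler_norm C)); rewrite divr_ge0 ?ltW.
by rewrite /e mulrAC ler_pdivlMr //; nra.
Qed.

Section MaxLinearQuadratic.
Variables (R : realType) (n l : nat).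

Lemma sup_simplex_dotv (c : 'rV[R]_l.+1) :
  sup [set dotv lam c | lam in @simplex R l.+1] = maxI (fun i => c 0 i).
Proof.
set S := [set _ | _ in _]; set M := maxI _.
have ubS : ubound S M.
  move=> _ [lam [lam0 lam1] <-]; apply: le_trans (_ : \sum_i lam 0 i * M <= _).
    by apply: ler_sum => i _; apply: ler_wpM2l => //; exact: le_maxI.
  by rewrite -mulr_suml lam1 mul1r.
have [i Mi] := maxI_attained (fun i => c 0 i).
pose e : 'rV[R]_l.+1 := \row_j (j == i)%:R.
have e_simplex : simplex e.
  split=> [j|]; first by rewrite mxE ler0n.
  by rewrite (bigD1 i) //= mxE eqxx big1 ?addr0 // => j /negbTE ji; rewrite mxE ji.
have ec : dotv e c = M.
  rewrite /M Mi /dotv (bigD1 i) //= mxE eqxx mul1r big1 ?addr0 // => j /negbTE ji.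
  by rewrite mxE ji mul0r.
apply/le_anti/andP; split; first by apply: ge_sup => //; exists M, e.
by rewrite -ec; apply: sup_upper_bound; [split; [exists (dotv e c), e | exists M] | exists e].
Qed.

Definition maxlin_obj (g : 'I_l.+1 -> 'rV[R]_n) (v : 'rV[R]_n) : R :=
  maxI (fun i => dotv (g i) v) + dotv v v / 2.

Variables (g : 'I_l.+1 -> 'rV[R]_n) (d : 'rV[R]_n).
Hypothesis d_argmin : forall v, maxlin_obj g d <= maxlin_obj g v.

(* First-order optimality: compare with [d + s u] and let [s] tend to [0]. *)
Lemma maxlin_argmin_opt u : exists i, 0 <= dotv (g i + d) u.
Proof.
pose G i := dotv (g i + d) u.
suff : 0 <= maxI G by have [i ->] := maxI_attained G; exists i.
rewrite -oppr_le0; apply: (@le0_of_le_mul _ _ (dotv u u / 2)) => s /andP[s0 _].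
have [i Mi] := maxI_attained (fun i => dotv (g i) (d + s *: u)).
have := d_argmin (d + s *: u); rewrite /maxlin_obj Mi.
rewrite !(dotvDl, dotvDr, dotvZl, dotvZr) (dotvC u d) => hs.
have gid := le_maxI (fun i => dotv (g i) d) i.
have : 0 <= s * (G i + s * (dotv u u / 2)) by rewrite /G dotvDl; nra.
rewrite pmulr_rge0 // => hG; have := le_maxI G i; lra.
Qed.

Lemma maxlin_argmin_value : maxI (fun i => dotv (g i) d) = - dotv d d.
Proof.
set M := maxI _; set D := dotv d d.
apply/le_anti/andP; split; last first.
  have [i] := maxlin_argmin_opt d; rewrite dotvDl -/D => hi.
  by have := le_maxI (fun i => dotv (g i) d) i; rewrite -/M; lra.
rewrite -subr_le0 opprK; apply: (@le0_of_le_mul _ _ (D / 2)) => e /andP[e0 e1].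
have [i Mi] := maxI_attained (fun i => dotv (g i) ((1 - e) *: d)).
have := d_argmin ((1 - e) *: d); rewrite /maxlin_obj Mi !(dotvZl, dotvZr) -/M -/D => he.
have gid : (1 - e) * dotv (g i) d <= (1 - e) * M by rewrite ler_wpM2l ?subr_ge0 // le_maxI.
have : 0 <= e * (e * (D / 2) - (M + D)) by nra.
by rewrite pmulr_rge0 // subr_ge0 mulrC.
Qed.

End MaxLinearQuadratic.

Section ConeOrder.
Variables (R : realType) (l m : nat) (A : 'M[R]_(l, m)).
Implicit Types (a : R) (u v z : 'rV[R]_m).

Lemma AmapD u v i : Amap A (u + v) 0 i = Amap A u 0 i + Amap A v 0 i.
Proof. by rewrite /Amap mulmxDl mxE. Qed.

Lemma AmapZ a u i : Amap A (a *: u) 0 i = a * Amap A u 0 i.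
Proof. by rewrite /Amap -scalemxAl mxE. Qed.

Lemma AmapB u v i : Amap A (u - v) 0 i = Amap A u 0 i - Amap A v 0 i.
Proof. by rewrite AmapD -scaleN1r AmapZ mulN1r. Qed.

Lemma leK_Amap u v : leK A u v -> forall i, Amap A u 0 i <= Amap A v 0 i.
Proof. by move=> uv i; have := uv i; rewrite AmapB subr_ge0. Qed.

Lemma Amap_continuous i : continuous (fun z => Amap A z 0 i).
Proof.
have -> : (fun z => Amap A z 0 i) = fun z => \sum_j z 0 j * A i j.
  by apply/funext => z; rewrite mxE; apply: eq_bigr => j _; rewrite mxE.
apply: continuous_big => [|j _ z]; first exact: add_continuous.
exact: (continuous_comp (@coord_continuous _ 1 m 0 j z) (@mulrr_continuous _ (A i j) _)).
Qed.

(* Since [A K] contains the unit vector [e_i], the ball around [z] inside [K]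
   contains [z - c w] for some [w] in [K] with [A w = e_i] and [c > 0]. *)
Lemma interior_coneK_gt0 z : in_calA A -> interior (coneK A) z ->
  forall i, 0 < Amap A z 0 i.
Proof.
move=> calA zint i.
have [w Kw Aw] : (Amap A @` coneK A) (\row_j (j == i)%:R).
  by rewrite calA => j; rewrite mxE ler0n.
have [eps eps0 ball_in] := (nbhs_ballP _ _).1 zint.
pose c := eps / (`|w| + 1).
have c0 : 0 < c by rewrite divr_gt0 // ltr_wpDl.
have /(_ i) : coneK A (z - c *: w).
  apply: ball_in; rewrite -ball_normE /= opprB addrC subrK normrZ gtr0_norm //.
  by rewrite /c mulrAC ltr_pdivrMr ?ltr_wpDl // ltr_pM2l // ltrDl.
rewrite AmapB AmapZ Aw [X in c * X]mxE eqxx mulr1 subr_ge0.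
exact: lt_le_trans.
Qed.

End ConeOrder.

Section Gradients.
Variables (R : realType) (n l m : nat) (A : 'M[R]_(l.+1, m)).
Variable F : 'rV[R]_n -> 'rV[R]_m.
Implicit Types (x y v : 'rV[R]_n) (ell mu : 'rV[R]_m).

(* the gradient of [x |-> <A_i, F x>] *)
Definition Kgrad x i : 'rV[R]_n := (col i (jac F x *m A^T))^T.

Lemma Amap_diff x v i : Amap A ('d F x v) 0 i = dotv (Kgrad x i) v.
Proof.
rewrite /Amap -(mul_rV_lin1 ('d F x)) -mulmxA mxE.
by apply: eq_bigr => j _; rewrite !mxE mulrC.
Qed.

Lemma yBB_Kgrad xp xk i : yBB A F xp xk i = Kgrad xk i - Kgrad xp i.
Proof. by apply/rowP => j; rewrite !mxE. Qed.

Lemma subobj_maxlin x (al : 'I_l.+1 -> R) v :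
  subobj A F x al v = maxlin_obj (fun i => (al i)^-1 *: Kgrad x i) v.
Proof.
rewrite /subobj sup_simplex_dotv enorm_sqr; congr (maxI _ + _).
by apply/funext => i; rewrite mxE Amap_diff dotvZl mulrC.
Qed.

Lemma Kconvex_Amap mu x y i : strongly_Kconvex A F mu ->
  dotv (Kgrad x i) (y - x) + dotv (y - x) (y - x) / 2 * Amap A mu 0 i
  <= Amap A (F y) 0 i - Amap A (F x) 0 i.
Proof.
by move=> /(_ x y)/leK_Amap/(_ i); rewrite AmapB AmapD AmapZ (Amap_diff x) enorm_sqr.
Qed.

Lemma Ksmooth_Amap ell x y i : K_smooth A F ell ->
  Amap A (F y) 0 i - Amap A (F x) 0 i
  <= dotv (Kgrad x i) (y - x) + dotv (y - x) (y - x) / 2 * Amap A ell 0 i.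
Proof.
by move=> /(_ x y)/leK_Amap/(_ i); rewrite AmapB AmapD AmapZ (Amap_diff x) enorm_sqr.
Qed.

Lemma yBB_curvature mu ell xp xk i : strongly_Kconvex A F mu -> K_smooth A F ell ->
  dotv (xk - xp) (xk - xp) * Amap A mu 0 i <= dotv (xk - xp) (yBB A F xp xk i)
  <= dotv (xk - xp) (xk - xp) * Amap A ell 0 i.
Proof.
move=> Fcvx Fsmo; rewrite yBB_Kgrad.
have c1 := Kconvex_Amap xp xk i Fcvx; have c2 := Kconvex_Amap xk xp i Fcvx.
have s1 := Ksmooth_Amap xp xk i Fsmo; have s2 := Ksmooth_Amap xk xp i Fsmo.
move: c1 c2 s1 s2; rewrite -(opprB xk xp).
(* opaque names keep the rewrites below from unfolding [Kgrad] during matching *)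
move: (xk - xp) (Kgrad xk i) (Kgrad xp i) => s gk gp.
rewrite dotvBr !(dotvNl, dotvNr) opprK (dotvC s gk) (dotvC s gp).
by move=> *; apply/andP; split; lra.
Qed.

Lemma ls_cond_small ell x dd (al : 'I_l.+1 -> R) c : K_smooth A F ell -> 0 <= c ->
  (forall i, c * Amap A ell 0 i <= al i) -> ls_cond A F x dd al c.
Proof.
move=> Fsmo c0 c_al i; rewrite AmapB (Amap_diff x dd) enorm_sqr.
have := Ksmooth_Amap x (x + c *: dd) i Fsmo.
rewrite [x + _ - x]addrC addKr dotvZr !dotvZl dotvZr => h.
have : 0 <= c * dotv dd dd * (al i - c * Amap A ell 0 i).
  by rewrite !mulr_ge0 ?dotv_ge0 // subr_ge0.
lra.
Qed.

End Gradients.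

Lemma bb_between (R : realType) n (amin amax lo hi : R) (s y : 'rV[R]_n) :
  0 < lo -> amin <= lo -> hi <= amax -> s != 0 ->
  dotv s s * lo <= dotv s y <= dotv s s * hi -> lo <= bb amin amax s y <= hi.
Proof.
move=> lo0 amin_lo hi_amax s0 /andP[s_lo s_hi].
have ss0 := dotv_gt0 s0.
have sy0 : 0 < dotv s y by apply: lt_le_trans s_lo; rewrite mulr_gt0.
have q_lo : lo <= dotv s y / dotv s s by rewrite ler_pdivlMr // mulrC.
have q_hi : dotv s y / dotv s s <= hi by rewrite ler_pdivrMr // mulrC.
have lo_hi := le_trans q_lo q_hi.
rewrite /bb sy0 enorm_sqr le_max le_min ge_max ge_min q_lo q_hi.
by rewrite (le_trans lo_hi hi_amax) (le_trans amin_lo lo_hi) !orbT.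
Qed.

Lemma backtracking_ge (R : realType) (g c0 t : R) (P : R -> Prop) :
  0 < g < 1 -> 0 < c0 <= 1 -> (forall c, 0 < c <= c0 -> P c) ->
  (forall j, P (g ^+ j) -> g ^+ j <= t) -> g * c0 <= t.
Proof.
move=> /andP[g0 g1] /andP[c00 c01] P_small t_max.
have small_pow : exists j, g ^+ j <= c0.
  have : `|g| < 1 by rewrite gtr0_norm.
  move=> /cvg_expr/cvgrPdist_lt/(_ c0 c00) [N _ /(_ N (leqnn N))].
  by rewrite /= sub0r normrN gtr0_norm ?exprn_gt0 // => /ltW; exists N.
case: (ex_minnP small_pow) => j gj minj.
have gj_t : g ^+ j <= t by apply/t_max/P_small; rewrite exprn_gt0.
apply: le_trans gj_t; case: j gj minj => [|j] _ minj.
  by rewrite expr0 (le_trans (ler_wpM2l (ltW g0) c01)) // mulr1 ltW.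
rewrite exprS ler_pM2l // leNgt; apply/negP => /ltW/minj.
by rewrite ltnn.
Qed.

Section GeometricConvergence.
Variables (R : realType) (n : nat) (q : R).
Hypothesis q01 : 0 < q < 1.

Lemma geometric_lt B eps : 0 <= B -> 0 < eps ->
  exists N, forall k, (N <= k)%N -> q ^+ k * B < eps.
Proof.
move: q01 => /andP[q0 q1] B0 eps0.
have B1 : 0 < B + 1 by rewrite ltr_wpDl.
have : `|q| < 1 by rewrite gtr0_norm.
move=> /cvg_expr/cvgrPdist_lt/(_ (eps / (B + 1))) [|N _ HN]; first by rewrite divr_gt0.
exists N => k /HN; rewrite /= sub0r normrN gtr0_norm ?exprn_gt0 // => qk.
apply: le_lt_trans (ler_wpM2r B0 (ltW qk)) _.
by rewrite mulrAC ltr_pdivrMr // ltr_pM2l // ltrDl.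
Qed.

Lemma cvg_geometric_cauchy (u : nat -> 'rV[R]_n) B :
  (forall N j, (N <= j)%N -> enorm (u N - u j) <= q ^+ N * B) -> cvg (u @ \oo).
Proof.
move=> uB; have B0 : 0 <= B.
  by have := uB 0%N 0%N (leqnn 0); rewrite expr0 mul1r; apply: le_trans; apply: enorm_ge0.
apply/cauchy_cvgP; apply: cauchy_exP => eps eps0.
have [N HN] := geometric_lt B0 eps0.
exists (u N), N => // j /= Nj; rewrite -ball_normE /=.
apply: le_lt_trans (normr_le_enorm _) _.
exact: le_lt_trans (uB N j Nj) (HN N (leqnn N)).
Qed.

Lemma cvg_to_geometric (u : nat -> 'rV[R]_n) y B :
  (forall N, enorm (u N - y) <= q ^+ N * B) -> u @ \oo --> y.
Proof.
move=> uB; have B0 : 0 <= B.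
  by have := uB 0%N; rewrite expr0 mul1r; apply: le_trans; apply: enorm_ge0.
apply/cvgrPdist_lt => eps eps0; have [N HN] := geometric_lt B0 eps0.
exists N => // k Nk /=; rewrite distrC; apply: le_lt_trans (normr_le_enorm _) _.
exact: le_lt_trans (uB k) (HN k Nk).
Qed.

End GeometricConvergence.

Lemma enorm_le_sqrt_mul (R : realType) k (u v : 'rV[R]_k) c :
  dotv u u <= c * dotv v v -> enorm u <= Num.sqrt c * enorm v.
Proof.
move=> uv; have [c0|c0] := leP 0 c; first by rewrite -sqrtrM // ler_wsqrtr.
rewrite ltr0_sqrtr // mul0r /enorm ler0_sqrtr //.
exact: le_trans uv (mulr_le0_ge0 (ltW c0) (dotv_ge0 v)).
Qed.

Section KBarzilaiBorwein.
Variables (R : realType) (n m l : nat) (A : 'M[R]_(l.+1, m)).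
Variables (F : 'rV[R]_n -> 'rV[R]_m) (ell mu : 'rV[R]_m).
Variables (amin amax gamma : R) (xm1 : 'rV[R]_n) (x : nat -> 'rV[R]_n).
Variables (alpha : nat -> 'I_l.+1 -> R) (d : nat -> 'rV[R]_n) (t : nat -> R).

Hypothesis F_cont : continuous F.
Hypothesis F_smooth : K_smooth A F ell.
Hypothesis F_convex : strongly_Kconvex A F mu.
Hypothesis mu_gt0 : forall i, 0 < Amap A mu 0 i.
Hypothesis amin_le_mu : forall i, amin <= Amap A mu 0 i.
Hypothesis ell_le_amax : forall i, Amap A ell 0 i <= amax.
Hypothesis xm1_neq_x0 : xm1 != x 0.
Hypothesis gamma01 : 0 < gamma < 1.
Hypothesis alphaE : forall k i, alpha k i = alphaBB amin amax A F (prevx xm1 x k) (x k) i.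
Hypothesis d_argmin :
  forall k v, subobj A F (x k) (alpha k) (d k) <= subobj A F (x k) (alpha k) v.
Hypothesis d_neq0 : forall k, d k <> 0.
Hypothesis t_armijo : forall k, exists j : nat,
  t k = gamma ^+ j /\ ls_cond A F (x k) (d k) (alpha k) (gamma ^+ j) /\
  forall j' : nat, ls_cond A F (x k) (d k) (alpha k) (gamma ^+ j') ->
                   gamma ^+ j' <= gamma ^+ j.
Hypothesis xS : forall k, x k.+1 = x k + t k *: d k.

Lemma t_gt0 k : 0 < t k.
Proof. by have [j [-> _]] := t_armijo k; rewrite exprn_gt0 //; case/andP: gamma01. Qed.

Lemma t_ls_cond k : ls_cond A F (x k) (d k) (alpha k) (t k).
Proof. by have [j [-> []]] := t_armijo k. Qed.

Lemma x_step_neq0 k : x k - prevx xm1 x k != 0.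
Proof.
case: k => [|k] /=; first by rewrite subr_eq0 eq_sym.
by rewrite xS addrC addKr scaler_eq0 negb_or gt_eqF ?t_gt0 //=; apply/eqP.
Qed.

Lemma alpha_bounds k i : Amap A mu 0 i <= alpha k i <= Amap A ell 0 i.
Proof.
rewrite alphaE; apply: bb_between (mu_gt0 i) (amin_le_mu i) (ell_le_amax i) _ _.
  exact: x_step_neq0.
exact: yBB_curvature.
Qed.

Lemma alpha_gt0 k i : 0 < alpha k i.
Proof. by apply: lt_le_trans (mu_gt0 i) _; case/andP: (alpha_bounds k i). Qed.

Lemma ell_gt0 i : 0 < Amap A ell 0 i.
Proof. by apply: lt_le_trans (alpha_gt0 0 i) _; case/andP: (alpha_bounds 0 i). Qed.

Let g k i := (alpha k i)^-1 *: Kgrad A F (x k) i.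

Lemma d_maxlin_argmin k v : maxlin_obj (g k) (d k) <= maxlin_obj (g k) v.
Proof. by rewrite -!subobj_maxlin. Qed.

Lemma descent_Kgrad k i :
  dotv (Kgrad A F (x k) i) (d k) <= - (alpha k i * dotv (d k) (d k)).
Proof.
have := le_maxI (fun i => dotv (g k i) (d k)) i.
rewrite maxlin_argmin_value; last exact: d_maxlin_argmin.
move=> /(ler_wpM2l (ltW (alpha_gt0 k i))).
by rewrite /g dotvZl mulrA mulfV ?gt_eqF ?alpha_gt0 // mul1r mulrN.
Qed.

Lemma descent_opt k u :
  exists i, 0 <= dotv (Kgrad A F (x k) i) u / alpha k i + dotv (d k) u.
Proof.
have [i] := maxlin_argmin_opt (d_maxlin_argmin k) u.
by rewrite /g dotvDl dotvZl mulrC; exists i.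
Qed.

Lemma sufficient_decrease k i :
  Amap A (F (x k.+1)) 0 i - Amap A (F (x k)) 0 i
  <= - (t k * alpha k i * dotv (d k) (d k) / 2).
Proof.
have := t_ls_cond k i; rewrite -xS AmapB (Amap_diff A F (x k) (d k)) enorm_sqr.
have := ler_wpM2l (ltW (t_gt0 k)) (descent_Kgrad k i).
lra.
Qed.

Lemma F_Amap_nonincreasing k i : Amap A (F (x k.+1)) 0 i <= Amap A (F (x k)) 0 i.
Proof.
rewrite -subr_le0; apply: le_trans (sufficient_decrease k i) _.
by rewrite oppr_le0 divr_ge0 // !mulr_ge0 ?dotv_ge0 // ltW ?t_gt0 ?alpha_gt0.
Qed.

Lemma F_Amap_le j k : (j <= k)%N ->
  forall i, Amap A (F (x k)) 0 i <= Amap A (F (x j)) 0 i.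
Proof.
move=> /subnK <- i; elim: (k - j)%N => [|p IH]; first by rewrite add0n.
by rewrite addSn; exact: le_trans (F_Amap_nonincreasing _ i) IH.
Qed.

(* With [v = y - x^k] and [i] the index given by the optimality of [d^k],
   convexity, sufficient decrease and [A F y <= A F x^{k+1}] give
   [t |d|^2 + (mu_i / alpha_i) |v|^2 <= 2 <d, v>]; expand [|t d - v|^2]. *)
Lemma dotv_step_le k y : (forall i, Amap A (F y) 0 i <= Amap A (F (x k.+1)) 0 i) ->
  dotv (x k.+1 - y) (x k.+1 - y)
  <= (1 - minI (fun i => t k * Amap A mu 0 i / alpha k i)) * dotv (x k - y) (x k - y).
Proof.
move=> y_le; have [i opt] := descent_opt k (y - x k).
have cvx := Kconvex_Amap (x k) y i F_convex.
have dec := sufficient_decrease k i.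
have yi := y_le i.
have c_le := minI_le (fun i => t k * Amap A mu 0 i / alpha k i) i.
have a0 := alpha_gt0 k i; have t0 := t_gt0 k.
have -> : x k.+1 - y = t k *: d k - (y - x k).
  by rewrite xS; apply/rowP => j; rewrite !mxE; lra.
rewrite -[x k - y]opprB dotvNl dotvNr opprK.
move: opt cvx c_le; move: (y - x k) (Kgrad A F (x k) i) => v gi opt cvx c_le.
rewrite dotvBl !dotvBr !dotvZl !dotvZr (dotvC v (d k)).
have {}opt : 0 <= dotv gi v + alpha k i * dotv (d k) v.
  by have := mulr_ge0 (ltW a0) opt; rewrite mulrDr mulrCA mulfV ?gt_eqF // mulr1.
have key : t k * alpha k i * dotv (d k) (d k) + dotv v v * Amap A mu 0 i
           <= 2 * (alpha k i * dotv (d k) v) by lra.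
have keyt : t k * (t k * dotv (d k) (d k)) + t k * Amap A mu 0 i / alpha k i * dotv v v
            <= 2 * (t k * dotv (d k) v).
  rewrite -(ler_pM2l a0) mulrDr.
  have -> : alpha k i * (t k * Amap A mu 0 i / alpha k i * dotv v v)
            = t k * (dotv v v * Amap A mu 0 i) by field; rewrite gt_eqF.
  have := ler_wpM2l (ltW t0) key; lra.
have := ler_wpM2r (dotv_ge0 v) c_le; lra.
Qed.

Lemma t_lower_bound k : minI (fun i => gamma * alpha k i / Amap A ell 0 i) <= t k.
Proof.
have [i0 c0E] := minI_attained (fun i => alpha k i / Amap A ell 0 i).
apply: le_trans (minI_le _ i0) _; rewrite -mulrA -c0E.
have [j [tE [_ t_max]]] := t_armijo k.
apply: (backtracking_ge (P := ls_cond A F (x k) (d k) (alpha k))) => //.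
- rewrite c0E divr_gt0 ?alpha_gt0 ?ell_gt0 //= ler_pdivrMr ?ell_gt0 // mul1r.
  by case/andP: (alpha_bounds k i0).
- move=> c /andP[c0 c_le]; apply: (ls_cond_small _ _ F_smooth (ltW c0)) => i.
  by rewrite -ler_pdivlMr ?ell_gt0 //; apply: le_trans c_le (minI_le _ i).
- by move=> j' /t_max; rewrite tE.
Qed.

Let r := minI (fun i => Amap A mu 0 i / Amap A ell 0 i).

Lemma r_gt0 : 0 < r.
Proof.
rewrite /r; have [i ->] := minI_attained (fun i => Amap A mu 0 i / Amap A ell 0 i).
by rewrite divr_gt0 ?ell_gt0.
Qed.

Lemma r_le_ratio k i : r <= Amap A mu 0 i / alpha k i.
Proof.
apply: le_trans (minI_le _ i) _; rewrite ler_pM2l // lef_pV2 ?posrE ?alpha_gt0 ?ell_gt0 //.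
by case/andP: (alpha_bounds k i).
Qed.

Lemma gamma_r_le_t k : gamma * r <= t k.
Proof.
apply: le_trans (t_lower_bound k); apply: le_minI => i.
rewrite -mulrA ler_pM2l; last by case/andP: gamma01.
apply: le_trans (minI_le _ i) _; apply: ler_wpM2r; first by rewrite invr_ge0 ltW ?ell_gt0.
by case/andP: (alpha_bounds k i).
Qed.

Lemma contraction_ratio_ge k :
  gamma * r ^+ 2 <= minI (fun i => t k * Amap A mu 0 i / alpha k i).
Proof.
have [g0 _] := andP gamma01.
apply: le_minI => i; rewrite expr2 mulrA -[t k * _ / _]mulrA.
by apply: ler_pM (gamma_r_le_t k) (r_le_ratio k i); rewrite ?mulr_ge0 ?ltW ?r_gt0.
Qed.

Let q := Num.sqrt (1 - gamma * r ^+ 2).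

Lemma q01 : 0 < q < 1.
Proof.
have [g0 g1] := andP gamma01.
have r1 : r <= 1.
  apply: le_trans (r_le_ratio 0 ord0) _; rewrite ler_pdivrMr ?alpha_gt0 // mul1r.
  by case/andP: (alpha_bounds 0 ord0).
have r2 : 0 < r ^+ 2 <= 1 by rewrite exprn_gt0 ?r_gt0 //= expr_le1 // ltW ?r_gt0.
have [r20 r21] := andP r2.
have : 0 < 1 - gamma * r ^+ 2 < 1 by apply/andP; split; nra.
case/andP => q0 q1; rewrite /q sqrtr_gt0 q0 -[ltRHS]sqrtr1 ltr_sqrt //.
Qed.

Lemma enorm_step_le k y : (forall i, Amap A (F y) 0 i <= Amap A (F (x k.+1)) 0 i) ->
  enorm (x k.+1 - y) <= q * enorm (x k - y).
Proof.
move=> y_le; apply: enorm_le_sqrt_mul; apply: le_trans (dotv_step_le y_le) _.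
by rewrite ler_wpM2r ?dotv_ge0 // lerD2l lerN2 contraction_ratio_ge.
Qed.

Lemma enorm_iter_le N y : (forall i, Amap A (F y) 0 i <= Amap A (F (x N)) 0 i) ->
  enorm (x N - y) <= q ^+ N * enorm (x 0 - y).
Proof.
elim: N => [|N IH] y_le; first by rewrite expr0 mul1r.
apply: le_trans (enorm_step_le y_le) _.
rewrite exprS -mulrA ler_pM2l; last by case/andP: q01.
by apply: IH => i; apply: le_trans (y_le i) (F_Amap_nonincreasing N i).
Qed.

Lemma x_cvg : cvg (x @ \oo).
Proof.
have [q0 q1] := andP q01.
pose B := enorm (x 0 - x 1) / (1 - q).
have x0_bound j : enorm (x 0 - x j) <= B.
  case: j => [|j].
    by rewrite subrr /enorm dotv0l sqrtr0 divr_ge0 ?enorm_ge0 // subr_ge0 ltW.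
  have tri := enormD (x 0 - x 1) (x 1 - x j.+1); rewrite addrA subrK in tri.
  have := enorm_step_le (F_Amap_le (ltn0Sn j)); rewrite /B ler_pdivlMr ?subr_gt0 //.
  lra.
apply: (cvg_geometric_cauchy q01 (B := B)) => N j Nj.
apply: le_trans (enorm_iter_le (F_Amap_le Nj)) _.
by apply: ler_wpM2l (x0_bound j); rewrite exprn_ge0 // ltW.
Qed.

Lemma F_Amap_limit_le xs : x @ \oo --> xs ->
  forall k i, Amap A (F xs) 0 i <= Amap A (F (x k)) 0 i.
Proof.
move=> x_xs k i.
have Fi_cont : continuous (fun z => Amap A (F z) 0 i).
  move=> z; apply: (@continuous_comp _ _ _ F (fun y => Amap A y 0 i)).
    exact: F_cont.
  exact: Amap_continuous.
apply: cvgr_to_le (continuous_cvg _ (Fi_cont xs) x_xs) _.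
by exists k => // j /= kj; exact: F_Amap_le.
Qed.

Lemma limit_efficient xs : x @ \oo --> xs -> efficient A F xs.
Proof.
move=> x_xs [y [Fy_le Fy_neq]]; apply: Fy_neq.
have y_le N i : Amap A (F y) 0 i <= Amap A (F (x N)) 0 i.
  exact: le_trans (leK_Amap Fy_le i) (F_Amap_limit_le x_xs N i).
have x_y : x @ \oo --> y.
  by apply: (cvg_to_geometric q01 (B := enorm (x 0 - y))) => N; exact: enorm_iter_le.
by rewrite (cvg_unique _ x_y x_xs).
Qed.

End KBarzilaiBorwein.

Theorem lemma5p3 (R : realType) (n m l : nat) (A : 'M[R]_(l.+1, m))
  (F : 'rV[R]_n -> 'rV[R]_m) (ell mu : 'rV[R]_m)
  (amin amax gamma : R) (xm1 : 'rV[R]_n) (x : nat -> 'rV[R]_n)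
  (alpha : nat -> 'I_l.+1 -> R) (d : nat -> 'rV[R]_n) (t : nat -> R) :
  in_calA A ->
  pointed_cone (coneK A) ->
  interior (coneK A) !=set0 ->
  (forall z, differentiable F z) ->
  K_smooth A F ell -> interior (coneK A) ell ->
  strongly_Kconvex A F mu -> interior (coneK A) mu ->
  0 < amin -> amin <= minI (fun i => Amap A mu 0 i) ->
  maxI (fun i => Amap A ell 0 i) <= amax ->
  xm1 != x 0 ->
  0 < gamma < 1 ->
  KBB_seq A F amin amax gamma xm1 x alpha d t ->
  (forall k i, Amap A mu 0 i <= alpha k i <= Amap A ell 0 i) /\
  (forall k, minI (fun i => gamma * alpha k i / Amap A ell 0 i) <= t k) /\
  (exists xs : 'rV[R]_n,
      efficient A F xs /\
      x @ \oo --> xs /\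
      (forall k, enorm (x k.+1 - xs)
                 <= Num.sqrt (1 - minI (fun i => t k * Amap A mu 0 i / alpha k i))
                    * enorm (x k - xs))).
Proof.
move=> calA _ _ F_diff F_smooth _ F_convex mu_int _ amin_le amax_ge xm1_neq_x0 gamma01.
move=> [alphaE [d_argmin [d_neq0 [t_armijo xS]]]].
have F_cont : continuous F by move=> z; exact: differentiable_continuous.
have mu_gt0 := interior_coneK_gt0 calA mu_int.
have amin_le_mu i : amin <= Amap A mu 0 i by exact: le_trans amin_le (minI_le _ i).
have ell_le_amax i : Amap A ell 0 i <= amax by exact: le_trans (le_maxI _ i) amax_ge.
split; first by apply: alpha_bounds; eassumption.
split; first by apply: t_lower_bound; eassumption.
have [xs x_xs] : exists xs : 'rV[R]_n, x @ \oo --> xs.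
  by exists (lim (x @ \oo)); apply: x_cvg; eassumption.
exists xs; split; first by apply: limit_efficient; eassumption.
split=> // k; apply: enorm_le_sqrt_mul; apply: dotv_step_le; try eassumption.
by move: k.+1; apply: F_Amap_limit_le; eassumption.
Qed.
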